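(* Let $q=2^m$ with $m\ge 4$ even. Then the incidence structure $(U_{q+1},\mathcal B_4(\mathcal C_{\{3,5\}}^\perp|_{\mathrm{GF}(q)}))$ formed by the supports of the minimum-weight codewords of $\mathcal C_{\{3,5\}}^\perp|_{\mathrm{GF}(q)}$ is a $3$-$(q+1,4,2)$ design.
   Context: $U_{q+1}$ is the set of $(q+1)$-th roots of unity in $\mathrm{GF}(q^2)$; coordinates are indexed by $U_{q+1}$. $\mathcal C_{\{3,5\}}=\{(a_3u^3+a_{q-2}u^{q-2}+a_5u^5+a_{q-4}u^{q-4})_{u\in U_{q+1}}: a_i\in\mathrm{GF}(q^2)\}$, $\mathcal C_{\{3,5\}}^\perp$ its dual under the standard inner product, $\mathcal C^\perp_{\{3,5\}}|_{\mathrm{GF}(q)}=\mathcal C^\perp_{\{3,5\}}\cap\mathrm{GF}(q)^{q+1}$ (its minimum distance is $4$). $\mathcal B_4(\mathcal C)$ is the set of supports of weight-$4$ codewords. A $t$-$(v,k,\lambda)$ design: $v$ points, blocks of size $k$, every $t$ points in exactly $\lambda$ blocks. *)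

From HB Require Import structures.
From mathcomp Require Import all_boot all_order all_algebra all_field.
Set Implicit Arguments. Unset Strict Implicit. Unset Printing Implicit Defensive.
Import GRing.Theory.
Local Open Scope ring_scope.

(* F plays the role of GF(q^2); GF(q) is the subfield {x | x^q = x}. *)

Definition Uroots (F : finFieldType) (q : nat) : {set F} :=
  [set u : F | u ^+ q.+1 == 1].

(* Vectors indexed by U_{q+1} are modelled as finite functions F -> F that
   vanish outside U_{q+1}. *)
Definition supported_on_U (F : finFieldType) (q : nat) (c : {ffun F -> F}) : bool :=
  [forall u, (u \notin Uroots F q) ==> (c u == 0)].

(* The codeword of C_{3,5} with coefficients (a3, a_{q-2}, a5, a_{q-4}),
   evaluated at u. *)
Definition C35_coord (F : finFieldType) (q : nat) (a3 aq2 a5 aq4 : F) (u : F) : F :=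
  a3 * u ^+ 3 + aq2 * u ^+ (q - 2) + a5 * u ^+ 5 + aq4 * u ^+ (q - 4).

Definition in_C35_dual (F : finFieldType) (q : nat) (c : {ffun F -> F}) : bool :=
  supported_on_U q c &&
  [forall a3 : F, forall aq2 : F, forall a5 : F, forall aq4 : F,
     \sum_(u in Uroots F q) c u * C35_coord q a3 aq2 a5 aq4 u == 0].

Definition in_C35_dual_GFq (F : finFieldType) (q : nat) (c : {ffun F -> F}) : bool :=
  in_C35_dual q c && [forall u, c u ^+ q == c u].

Definition supp (F : finFieldType) (c : {ffun F -> F}) : {set F} :=
  [set u | c u != 0].

Definition B4_C35_dual_GFq (F : finFieldType) (q : nat) : {set {set F}} :=
  [set B : {set F} | [exists c : {ffun F -> F},
      [&& in_C35_dual_GFq q c, B == supp c & #|supp c| == 4%N]]].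

Definition is_design (T : finType) (t v k lambda : nat)
  (P : {set T}) (Bl : {set {set T}}) : Prop :=
  #|P| = v /\
  (forall b, b \in Bl -> b \subset P /\ #|b| = k) /\
  (forall S : {set T}, S \subset P -> #|S| = t ->
      #|[set b in Bl | S \subset b]| = lambda).

From mathcomp Require Import all_boot all_order all_algebra all_field.
From mathcomp Require Import ring zify.
Set Implicit Arguments. Unset Strict Implicit. Unset Printing Implicit Defensive.
Import GRing.Theory.
Local Open Scope ring_scope.

(* Let c be a word of the dual code carried by four points u1..u4 of U_{q+1}.  With
   x_i = u_i^2 and d_i = c_i u_i^(q-4), its four parity checks read
   sum_i d_i x_i^k = 0 for k = 0, 1, 4, 5.  In characteristic 2 this system has a
   nonzero solution iff a^2 + ab + b^2 = 0, where a/b is the cross-ratio of the x_i,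
   i.e. iff the x_i are equianharmonic; nonzero solutions then have full support, and
   the trace x + x^q of a suitable multiple of one is a solution with values in GF(q),
   because the code is stable under x -> x^q.
   Three points x1, x2, x3 of U_{q+1} have exactly two equianharmonic fourth points,
   of cross-ratio w and w^2 with them for a primitive cube root of unity w.  As m is
   even, w lies in GF(q), which forces both points into U_{q+1}.  Since squaring
   permutes U_{q+1}, every three points lie in exactly two blocks. *)

Lemma uniq4P (T : eqType) (a b c d : T) :
  reflect [/\ a != b, a != c, a != d & [/\ b != c, b != d & c != d]] (uniq [:: a; b; c; d]).
Proof.
rewrite /= !inE !negb_or andbT.
apply: (iffP and3P) => [[/and3P[? ? ?] /andP[? ?] ?] | [? ? ? [? ? ?]]].
  by split.
by split; [apply/and3P | apply/andP |].
Qed.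

Lemma uniq3P (T : eqType) (a b c : T) :
  reflect [/\ a != b, a != c & b != c] (uniq [:: a; b; c]).
Proof.
rewrite /= !inE !negb_or andbT.
by apply: (iffP andP) => [[/andP[? ?] ?] | [? ? ?]]; [split | split=> //; apply/andP].
Qed.

Lemma big_support_seq (T : finType) (R : nmodType) (A : {pred T}) (s : seq T) (f : T -> R) :
  uniq s -> {subset s <= A} -> (forall x, x \notin s -> f x = 0) ->
  \sum_(x in A) f x = \sum_(x <- s) f x.
Proof.
move=> s_uniq sA f0; rewrite big_uniq // (bigID (mem s)) /= [X in _ + X]big1 ?addr0.
  by apply: eq_bigl => x; apply/andb_idl => /sA.
by move=> x /andP[_ /f0].
Qed.

Lemma card_blocks_through (T : finType) (Bl : {set {set T}}) (S : {set T}) :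
  (forall b, b \in Bl -> #|b| = #|S|.+1) ->
  #|[set b in Bl | S \subset b]| = #|[set y | y \notin S & y |: S \in Bl]|.
Proof.
move=> card_Bl; rewrite -(card_in_imset (f := fun y => y |: S)); last first.
  move=> y y'; rewrite !inE => /andP[yS _] _ eq_yy'.
  by move: (setU11 y S); rewrite eq_yy' !inE (negPf yS) orbF => /eqP.
apply: eq_card => b; rewrite inE; apply/andP/imsetP => [[bBl Sb] | [y]].
  have /cards1P[y b_minus_S] : #|b :\: S| == 1%N.
    by rewrite cardsD (setIidPr Sb) card_Bl // subSnn.
  have b_eq : b = y |: S by rewrite -[LHS](setID b S) (setIidPr Sb) b_minus_S setUC.
  have /setDP[_ yS] : y \in b :\: S by rewrite b_minus_S set11.
  by exists y; rewrite // inE yS -b_eq.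
by rewrite inE => /andP[_ yS_Bl] ->; rewrite yS_Bl subsetUr.
Qed.

Definition word_on (T : finType) (R : nmodType) (s : seq T) (cs : seq R) : {ffun T -> R} :=
  [ffun x => nth 0 cs (index x s)].

Lemma word_on_nth (T : finType) (R : nmodType) (s : seq T) (cs : seq R) x0 i :
  uniq s -> (i < size s)%N -> word_on s cs (nth x0 s i) = nth 0 cs i.
Proof. by move=> s_uniq lt_i_s; rewrite ffunE index_uniq. Qed.

Lemma word_on_notin (T : finType) (R : nmodType) (s : seq T) (cs : seq R) x :
  (size cs <= size s)%N -> x \notin s -> word_on s cs x = 0.
Proof. by move=> le_cs_s x_notin; rewrite ffunE nth_default // memNindex. Qed.

Section TwoByTwo.
Variable F : fieldType.

Lemma det2_eq0 (a b c d e1 e2 : F) : (e1 != 0) || (e2 != 0) ->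
  e1 * a + e2 * b = 0 -> e1 * c + e2 * d = 0 -> a * d - b * c = 0.
Proof.
case/orP=> [e1n0|e2n0] h1 h2.
  apply: (mulfI e1n0); rewrite mulr0.
  have -> : e1 * (a * d - b * c) = d * (e1 * a + e2 * b) - b * (e1 * c + e2 * d) by ring.
  by rewrite h1 h2; ring.
apply: (mulfI e2n0); rewrite mulr0.
have -> : e2 * (a * d - b * c) = a * (e1 * c + e2 * d) - c * (e1 * a + e2 * b) by ring.
by rewrite h1 h2; ring.
Qed.

Lemma det2_eq0_kernel (a b c d : F) : a * d - b * c = 0 ->
  exists e1 e2, [/\ (e1 != 0) || (e2 != 0), e1 * a + e2 * b = 0 & e1 * c + e2 * d = 0].
Proof.
move=> det0.
have [ab0 | abn0] := boolP ((a == 0) && (b == 0)).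
  case/andP: ab0 => /eqP-> /eqP->.
  have [cd0 | cdn0] := boolP ((c == 0) && (d == 0)).
    by case/andP: cd0 => /eqP-> /eqP->; exists 1, 0; rewrite oner_eq0; split=> //; ring.
  exists d, (- c); split; try ring.
  by rewrite oppr_eq0 orbC -negb_and.
exists b, (- a); split; first by rewrite oppr_eq0 orbC -negb_and.
  by ring.
by rewrite -[RHS]oppr0 -det0; ring.
Qed.

End TwoByTwo.

Section PowerSums.
Variable F : fieldType.

Definition divdiff4 (a b : F) := a ^+ 3 + a ^+ 2 * b + a * b ^+ 2 + b ^+ 3.
Definition divdiff5 (a b : F) := a ^+ 4 + a ^+ 3 * b + a ^+ 2 * b ^+ 2 + a * b ^+ 3 + b ^+ 4.

Definition power_sum (x1 x2 x3 x4 d1 d2 d3 d4 : F) (n : nat) : F :=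
  d1 * x1 ^+ n + d2 * x2 ^+ n + d3 * x3 ^+ n + d4 * x4 ^+ n.

Definition power_sums_vanish (s : nat -> F) : Prop :=
  [/\ s 0%N = 0, s 1%N = 0, s 4%N = 0 & s 5%N = 0].

(* The cross-ratio of (x1, x2; x3, x4) is a/b; the form vanishes iff it is a primitive
   cube root of unity. *)
Definition equianharmonic (x1 x2 x3 x4 : F) : F :=
  let a := (x1 - x3) * (x2 - x4) in let b := (x1 - x4) * (x2 - x3) in
  a ^+ 2 + a * b + b ^+ 2.

Lemma power_sum_rot x1 x2 x3 x4 d1 d2 d3 d4 :
  power_sum x2 x3 x4 x1 d2 d3 d4 d1 =1 power_sum x1 x2 x3 x4 d1 d2 d3 d4.
Proof. by move=> n; rewrite /power_sum; ring. Qed.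

Lemma power_sums_reduce x1 x2 x3 x4 d1 d2 d3 d4 :
  power_sums_vanish (power_sum x1 x2 x3 x4 d1 d2 d3 d4) ->
  d1 * (x1 - x4) * (divdiff4 x1 x4 - divdiff4 x3 x4)
    + d2 * (x2 - x4) * (divdiff4 x2 x4 - divdiff4 x3 x4) = 0 /\
  d1 * (x1 - x4) * (divdiff5 x1 x4 - divdiff5 x3 x4)
    + d2 * (x2 - x4) * (divdiff5 x2 x4 - divdiff5 x3 x4) = 0.
Proof.
set s := power_sum _ _ _ _ _ _ _ _ => -[s0 s1 s4 s5]; split.
  transitivity (s 4%N - x4 ^+ 4 * s 0%N - divdiff4 x3 x4 * (s 1%N - x4 * s 0%N)).
    by rewrite /s /power_sum /divdiff4; ring.
  by rewrite s0 s1 s4; ring.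
transitivity (s 5%N - x4 ^+ 5 * s 0%N - divdiff5 x3 x4 * (s 1%N - x4 * s 0%N)).
  by rewrite /s /power_sum /divdiff5; ring.
by rewrite s0 s1 s5; ring.
Qed.

Lemma divdiff_det x1 x2 x3 x4 :
  (divdiff4 x1 x4 - divdiff4 x3 x4) * (divdiff5 x2 x4 - divdiff5 x3 x4)
    - (divdiff4 x2 x4 - divdiff4 x3 x4) * (divdiff5 x1 x4 - divdiff5 x3 x4)
  = (x1 - x2) * (x1 - x3) * (x2 - x3)
    * ((x1 + x2 + x3 + x4) * (x1 * x2 * x3 + x1 * x2 * x4 + x1 * x3 * x4 + x2 * x3 * x4)
       - (x1 * x2 + x1 * x3 + x1 * x4 + x2 * x3 + x2 * x4 + x3 * x4) ^+ 2).
Proof. by rewrite /divdiff4 /divdiff5; ring. Qed.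

(* For the quadruple (x1, x2, x3, X), a - w b = X * cross_den w - cross_num w, so
   cross_point w is the fourth point of cross-ratio w. *)
Definition cross_den (x1 x2 x3 w : F) : F := w * (x2 - x3) - (x1 - x3).
Definition cross_num (x1 x2 x3 w : F) : F := w * x1 * (x2 - x3) - x2 * (x1 - x3).

Definition cross_point (x1 x2 x3 w : F) : F := cross_num x1 x2 x3 w / cross_den x1 x2 x3 w.

Lemma equianharmonic_factor x1 x2 x3 w X : w ^+ 2 + w + 1 = 0 ->
  equianharmonic x1 x2 x3 X =
    (X * cross_den x1 x2 x3 w - cross_num x1 x2 x3 w)
    * (X * cross_den x1 x2 x3 (- (1 + w)) - cross_num x1 x2 x3 (- (1 + w))).
Proof.
move=> w_root; apply/eqP; rewrite -subr_eq0; apply/eqP.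
transitivity ((w ^+ 2 + w + 1) * ((x1 - X) * (x2 - x3)) ^+ 2).
  by rewrite /equianharmonic /cross_den /cross_num; ring.
by rewrite w_root mul0r.
Qed.

End PowerSums.

Section CharTwo.
Variable F : fieldType.
Hypothesis charF2 : 2%N \in [pchar F].

Lemma eq_mod2 (x y r : F) : x = y + r * 2%:R -> x = y.
Proof. by rewrite (pcharf0 charF2) mulr0 addr0. Qed.

Lemma sqrf_inj : injective (fun x : F => x ^+ 2).
Proof. exact: fmorph_inj (pFrobenius_aut charF2). Qed.

Lemma uniq_sqr (s : seq F) : uniq s -> uniq [seq x ^+ 2 | x <- s].
Proof. by rewrite (map_inj_uniq sqrf_inj). Qed.

Lemma equianharmonic_sym (x1 x2 x3 x4 : F) : equianharmonic x1 x2 x3 x4 =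
  (x1 + x2 + x3 + x4) * (x1 * x2 * x3 + x1 * x2 * x4 + x1 * x3 * x4 + x2 * x3 * x4)
  - (x1 * x2 + x1 * x3 + x1 * x4 + x2 * x3 + x2 * x4 + x3 * x4) ^+ 2.
Proof.
pose y1 := x1 * x2 + x3 * x4; pose y2 := x1 * x3 + x2 * x4; pose y3 := x1 * x4 + x2 * x3.
apply: (eq_mod2 (r := 2%:R * y1 ^+ 2 + y2 ^+ 2 + y3 ^+ 2 - y1 * y2 - y1 * y3 + y2 * y3
                      - 2%:R * x1 * x2 * x3 * x4)).
by rewrite /equianharmonic /y1 /y2 /y3; ring.
Qed.

Lemma equianharmonic_rot (x1 x2 x3 x4 : F) :
  equianharmonic x2 x3 x4 x1 = equianharmonic x1 x2 x3 x4.
Proof. by rewrite !equianharmonic_sym; ring. Qed.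

Lemma power_sums_vanish_eq0 (x1 x2 x3 x4 d2 d3 d4 : F) :
  uniq [:: x2; x3; x4] -> power_sums_vanish (power_sum x1 x2 x3 x4 0 d2 d3 d4) ->
  [/\ d2 = 0, d3 = 0 & d4 = 0].
Proof.
move=> /uniq3P[n23 n24 n34] ps.
have [] := power_sums_reduce ps; rewrite !mul0r !add0r.
set e := d2 * (x2 - x4) => h4 h5.
suff d2_0 : d2 = 0.
  case: ps; rewrite /power_sum d2_0 !mul0r !add0r !expr0 !mulr1 expr1 => s0 s1 _ _.
  have d4E : d4 = - d3 by apply/eqP; rewrite -addr_eq0 addrC s0.
  have /eqP : d3 * (x3 - x4) = 0 by rewrite -s1 d4E; ring.
  by rewrite mulf_eq0 subr_eq0 (negPf n34) orbF d4E => /eqP->; rewrite oppr0.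
have /eqP : e = 0.
  apply/eqP; apply: contraTT n23 => e_neq0.
  move: h4 h5 => /eqP; rewrite mulf_eq0 (negPf e_neq0) subr_eq0 => /eqP h4 /eqP.
  rewrite mulf_eq0 (negPf e_neq0) subr_eq0 => /eqP h5.
  have dd4_neq0 : divdiff4 x3 x4 != 0.
    apply: contra n34 => /eqP dd4_0; apply/eqP/sqrf_inj/sqrf_inj/eqP.
    rewrite -!exprM -[(2 * 2)%N]/4%N -subr_eq0.
    have -> : x3 ^+ 4 - x4 ^+ 4 = (x3 - x4) * divdiff4 x3 x4 by rewrite /divdiff4; ring.
    by rewrite dd4_0 mulr0.
  have : (x2 - x3) * divdiff4 x3 x4 = 0.
    rewrite -[RHS](_ : x2 * (divdiff4 x2 x4 - divdiff4 x3 x4)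
                       + (divdiff5 x2 x4 - divdiff5 x3 x4) = 0); last by rewrite h4 h5; ring.
    apply: (eq_mod2 (r := - (x2 - x3) * x2 *
      (x2 ^+ 2 + x3 ^+ 2 + x4 ^+ 2 + x2 * x3 + x2 * x4 + x3 * x4))).
    by rewrite /divdiff4 /divdiff5; ring.
  by move/eqP; rewrite mulf_eq0 subr_eq0 (negPf dd4_neq0) orbF negbK.
by rewrite mulf_eq0 subr_eq0 (negPf n24) orbF => /eqP.
Qed.

Lemma power_sums_vanish_rot (x1 x2 x3 x4 d1 d2 d3 d4 : F) :
  power_sums_vanish (power_sum x1 x2 x3 x4 d1 d2 d3 d4) ->
  power_sums_vanish (power_sum x2 x3 x4 x1 d2 d3 d4 d1).
Proof. by rewrite /power_sums_vanish !(power_sum_rot x1 x2 x3 x4 d1 d2 d3 d4). Qed.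

Lemma power_sums_vanish_neq0 (x1 x2 x3 x4 d1 d2 d3 d4 : F) :
  uniq [:: x1; x2; x3; x4] -> power_sums_vanish (power_sum x1 x2 x3 x4 d1 d2 d3 d4) ->
  d1 != 0 -> [/\ d2 != 0, d3 != 0 & d4 != 0].
Proof.
move=> uq ps d1_neq0.
have ps2 := power_sums_vanish_rot ps; have ps3 := power_sums_vanish_rot ps2.
have ps4 := power_sums_vanish_rot ps3.
have uq2 : uniq [:: x2; x3; x4; x1] by rewrite -(rot_uniq 3) /=.
have uq3 : uniq [:: x3; x4; x1; x2] by rewrite -(rot_uniq 2) /=.
have uq4 : uniq [:: x4; x1; x2; x3] by rewrite -(rot_uniq 1) /=.
split; apply: contraNneq d1_neq0 => dk_0.
- by move: ps2; rewrite dk_0 => /(power_sums_vanish_eq0 (andP uq2).2) [_ _ ->].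
- by move: ps3; rewrite dk_0 => /(power_sums_vanish_eq0 (andP uq3).2) [_ -> _].
- by move: ps4; rewrite dk_0 => /(power_sums_vanish_eq0 (andP uq4).2) [-> _ _].
Qed.

Lemma power_sums_vanish_equianharmonic (x1 x2 x3 x4 d1 d2 d3 d4 : F) :
  uniq [:: x1; x2; x3; x4] -> power_sums_vanish (power_sum x1 x2 x3 x4 d1 d2 d3 d4) ->
  d1 != 0 -> equianharmonic x1 x2 x3 x4 = 0.
Proof.
move=> /uniq4P[n12 n13 n14 [n23 _ _]] /power_sums_reduce[h4 h5] d1_neq0.
have e_neq0 : (d1 * (x1 - x4) != 0) || (d2 * (x2 - x4) != 0).
  by rewrite mulf_neq0 // subr_eq0.
move: (det2_eq0 e_neq0 h4 h5); rewrite divdiff_det -equianharmonic_sym => /eqP.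
by rewrite !mulf_eq0 !subr_eq0 (negPf n12) (negPf n13) (negPf n23) => /eqP.
Qed.

Lemma equianharmonic_power_sums_vanish (x1 x2 x3 x4 : F) :
  uniq [:: x1; x2; x3; x4] -> equianharmonic x1 x2 x3 x4 = 0 ->
  exists d1 d2 d3 d4, power_sums_vanish (power_sum x1 x2 x3 x4 d1 d2 d3 d4) /\ d1 != 0.
Proof.
move=> uq Q0; have /uniq4P[_ _ n14 [_ n24 n34]] := uq.
have := divdiff_det x1 x2 x3 x4; rewrite -equianharmonic_sym Q0 mulr0.
case/det2_eq0_kernel => e1 [e2 [e_neq0 h4 h5]].
pose e3 := - (e1 + e2).
pose d1 := e1 / (x1 - x4); pose d2 := e2 / (x2 - x4); pose d3 := e3 / (x3 - x4).
have E1 : d1 * (x1 - x4) = e1 by rewrite divfK // subr_eq0.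
have E2 : d2 * (x2 - x4) = e2 by rewrite divfK // subr_eq0.
have E3 : d3 * (x3 - x4) = e3 by rewrite divfK // subr_eq0.
have ps : power_sums_vanish (power_sum x1 x2 x3 x4 d1 d2 d3 (- (d1 + d2 + d3))).
  split; first by rewrite /power_sum; ring.
  - transitivity (d1 * (x1 - x4) + d2 * (x2 - x4) + d3 * (x3 - x4)).
      by rewrite /power_sum; ring.
    by rewrite E1 E2 E3 /e3; ring.
  - transitivity (d1 * (x1 - x4) * divdiff4 x1 x4 + d2 * (x2 - x4) * divdiff4 x2 x4
                  + d3 * (x3 - x4) * divdiff4 x3 x4).
      by rewrite /power_sum /divdiff4; ring.
    by rewrite E1 E2 E3 /e3 -[RHS]h4; ring.
  - transitivity (d1 * (x1 - x4) * divdiff5 x1 x4 + d2 * (x2 - x4) * divdiff5 x2 x4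
                  + d3 * (x3 - x4) * divdiff5 x3 x4).
      by rewrite /power_sum /divdiff5; ring.
    by rewrite E1 E2 E3 /e3 -[RHS]h5; ring.
exists d1, d2, d3, (- (d1 + d2 + d3)); split=> //.
apply: contraTneq e_neq0 => d1_0.
move: ps; rewrite d1_0 => /(power_sums_vanish_eq0 (andP uq).2) [d2_0 _ _].
by rewrite -E1 -E2 d1_0 d2_0 !mul0r eqxx.
Qed.

Lemma equianharmonic_repeat (x1 x2 x3 X : F) : uniq [:: x1; x2; x3] ->
  equianharmonic x1 x2 x3 X = 0 -> X \notin [:: x1; x2; x3].
Proof.
move=> /uniq3P[n12 n13 n23] Q0; apply/negP; rewrite !inE => /or3P[] /eqP X_eq.
all: move: Q0; rewrite {X}X_eq.
- rewrite (_ : equianharmonic _ _ _ _ = ((x1 - x3) * (x2 - x1)) ^+ 2).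
    by move/eqP; rewrite expf_eq0 !mulf_eq0 !subr_eq0 (negPf n13) eq_sym (negPf n12).
  by rewrite /equianharmonic; ring.
- rewrite (_ : equianharmonic _ _ _ _ = ((x1 - x2) * (x2 - x3)) ^+ 2).
    by move/eqP; rewrite expf_eq0 !mulf_eq0 !subr_eq0 (negPf n12) (negPf n23).
  by rewrite /equianharmonic; ring.
rewrite (_ : equianharmonic _ _ _ _ = ((x1 - x3) * (x2 - x3)) ^+ 2).
  by move/eqP; rewrite expf_eq0 !mulf_eq0 !subr_eq0 (negPf n13) (negPf n23).
apply: (eq_mod2 (r := ((x1 - x3) * (x2 - x3)) ^+ 2)).
by rewrite /equianharmonic; ring.
Qed.

(* Both factors of [equianharmonic_factor] differ by (1 + 2 w) (x1 - X) (x2 - x3). *)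
Lemma cross_factors_common_root (x1 x2 x3 w X : F) : x2 != x3 ->
  X * cross_den x1 x2 x3 w - cross_num x1 x2 x3 w = 0 ->
  X * cross_den x1 x2 x3 (- (1 + w)) - cross_num x1 x2 x3 (- (1 + w)) = 0 -> X = x1.
Proof.
move=> n23 f0 f'0; apply/eqP; rewrite eq_sym -subr_eq0.
have : (x1 - X) * (x2 - x3) = 0.
  rewrite -[RHS](subrr 0) -{1}f'0 -f0.
  apply: (eq_mod2 (r := - w * ((x1 - X) * (x2 - x3)))).
  by rewrite /cross_den /cross_num; ring.
by move/eqP; rewrite mulf_eq0 !subr_eq0 (negPf n23) orbF.
Qed.

End CharTwo.

Section FiniteField.
Variable F : finFieldType.

Lemma card_roots_lt (p : {poly F}) : p != 0 -> (#|[set z | root p z]| < size p)%N.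
Proof.
move=> p_neq0; rewrite cardE; apply: max_poly_roots p_neq0 _ (enum_uniq _).
by apply/allP => z; rewrite mem_enum inE.
Qed.

Lemma card_expr_eq_le n (a : F) : (0 < n)%N -> (#|[set z : F | z ^+ n == a]| <= n)%N.
Proof.
move=> n_gt0; have -> : [set z : F | z ^+ n == a] = [set z | root ('X^n - a%:P) z].
  by apply/setP => z; rewrite !inE rootE !hornerE subr_eq0.
by rewrite -ltnS -(size_XnsubC a n_gt0) card_roots_lt // -size_poly_eq0 size_XnsubC.
Qed.

Lemma expf_card_pred (z : F) : z != 0 -> z ^+ #|F|.-1 = 1.
Proof.
move=> z_neq0; apply: (mulIf z_neq0).
by rewrite mul1r -exprSr prednK ?expf_card // ltnW // finNzRing_gt1.
Qed.

Lemma exists_expr_neq1 k : (0 < k < #|F|.-1)%N -> exists2 z : F, z != 0 & z ^+ k != 1.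
Proof.
case/andP=> k_gt0 k_lt.
have [z /andP[z_neq0 zk_neq1] | all_roots] := pickP (fun z : F => (z != 0) && (z ^+ k != 1)).
  by exists z.
have : (#|[set~ (0%R : F)]| <= #|[set z : F | z ^+ k == 1%R]|)%N.
  apply/subset_leq_card/subsetP => z; rewrite !inE => z_neq0.
  by move: (all_roots z); rewrite z_neq0 => /negbFE.
by rewrite cardsC1 => /leq_trans/(_ (card_expr_eq_le 1 k_gt0)); rewrite leqNgt k_lt.
Qed.

Lemma exists_cube_root1 : (3 %| #|F|.-1)%N -> exists w : F, w ^+ 2 + w + 1 = 0.
Proof.
case/dvdnP=> k cardFk; have F_gt1 := finNzRing_gt1 F.
have k_gt0 : (0 < k)%N by move: F_gt1; rewrite -subn_gt0 subn1 cardFk muln_gt0 => /andP[].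
have [z z_neq0 zk_neq1] : exists2 z : F, z != 0 & z ^+ k != 1.
  by apply: exists_expr_neq1; rewrite cardFk k_gt0 ltn_Pmulr.
have w3 : (z ^+ k) ^+ 3 = 1.
  by rewrite -exprM -cardFk expf_card_pred.
exists (z ^+ k); apply/eqP.
have /eqP : (z ^+ k - 1) * ((z ^+ k) ^+ 2 + z ^+ k + 1) = 0.
  by transitivity ((z ^+ k) ^+ 3 - 1); [ring | rewrite w3 subrr].
by rewrite mulf_eq0 subr_eq0 (negPf zk_neq1).
Qed.

End FiniteField.

Section QuadraticExtension.
Variables (F : finFieldType) (q : nat).
Hypotheses (charF2 : 2%N \in [pchar F]) (qnat : [pchar F].-nat q).
Hypotheses (q_ge4 : (4 <= q)%N) (cardF : #|F| = (q * q)%N).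

Local Notation U := (Uroots F q).

Lemma exprqq (x : F) : (x ^+ q) ^+ q = x.
Proof. by rewrite -exprM -cardF expf_card. Qed.

Lemma expr0q : (0 : F) ^+ q = 0.
Proof. by rewrite expr0n gtn_eqF // (leq_trans _ q_ge4). Qed.

Lemma exprq_sum (I : Type) (r : seq I) (P : pred I) (f : I -> F) :
  (\sum_(i <- r | P i) f i) ^+ q = \sum_(i <- r | P i) f i ^+ q.
Proof. exact: (big_morph _ (fun x y => exprDn_pchar x y qnat) expr0q). Qed.

Lemma exprq_eq0 (x : F) : (x ^+ q == 0) = (x == 0).
Proof. by rewrite expf_eq0 (leq_trans _ q_ge4). Qed.

Lemma Uroots_exprS u : u \in U -> u ^+ q.+1 = 1.
Proof. by rewrite inE => /eqP. Qed.

Lemma Uroots_neq0 u : u \in U -> u != 0.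
Proof. by rewrite inE; apply: contraTneq => ->; rewrite expr0n /= eq_sym oner_neq0. Qed.

Lemma exprq_Uroots u : u \in U -> u ^+ q = u^-1.
Proof.
move=> uU; apply: (mulIf (Uroots_neq0 uU)).
by rewrite mulVf ?Uroots_neq0 // -exprSr Uroots_exprS.
Qed.

Lemma exprq_Uroots_conj u a b : u \in U -> (a + b = q.+1)%N -> (u ^+ a) ^+ q = u ^+ b.
Proof.
move=> uU ab; apply: (mulIf (expf_neq0 a (Uroots_neq0 uU))).
by rewrite exprAC -exprMn exprq_Uroots // mulVf ?Uroots_neq0 // expr1n -exprD addnC ab Uroots_exprS.
Qed.

Lemma Uroots_sqr u : (u ^+ 2 \in U) = (u \in U).
Proof.
rewrite !inE exprAC; apply/eqP/eqP => [u2 | ->]; last exact: expr1n.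
by apply: (sqrf_inj charF2); rewrite /= u2 expr1n.
Qed.

Lemma card_Uroots : #|U| = q.+1.
Proof.
have q_gt0 : (0 < q)%N by lia.
have nonzero : #|[set z : F | z != 0]| = (q * q).-1.
  by rewrite -cardF -(cardsC1 0); apply: eq_card => z; rewrite !inE.
have U_le : (#|U| <= q.+1)%N by apply: card_expr_eq_le.
have : (#|[set z : F | z != 0%R]| <= #|U| * (q - 1))%N.
  rewrite -sum1dep_card (partition_big (fun z : F => z ^+ (q - 1)) (mem U)) /=; last first.
    move=> z z_neq0; rewrite inE -exprM (_ : ((q - 1) * q.+1 = (q * q).-1)%N); last by nia.
    by rewrite -cardF expf_card_pred.
  rewrite -sum_nat_const; apply: leq_sum => t _; rewrite sum1dep_card.
  apply: leq_trans (card_expr_eq_le t _); last by lia.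
  by apply/subset_leq_card/subsetP => z; rewrite !inE => /andP[].
rewrite nonzero; move: U_le; move: #|U| => n; nia.
Qed.

Definition trace (x : F) : F := x + x ^+ q.

Lemma exprq_trace x : trace x ^+ q = trace x.
Proof. by rewrite /trace exprDn_pchar // exprqq addrC. Qed.

Lemma exists_trace_neq0 (a : F) : a != 0 -> exists k, trace (k * a) != 0.
Proof.
move=> a_neq0; have [z z_neq0 zq1_neq1] : exists2 z : F, z != 0 & z ^+ (q - 1) != 1.
  by apply: exists_expr_neq1; rewrite cardF; nia.
exists (z / a); rewrite divfK //; apply: contra zq1_neq1 => trace0.
have zq : z ^+ q = z.
  by apply/eqP; rewrite -[X in _ == X](oppr_pchar2 charF2) -addr_eq0 addrC.
apply/eqP; apply: (mulIf z_neq0); rewrite mul1r -exprSr (_ : (q - 1).+1 = q)%N //; lia.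
Qed.

Lemma exprq_C35_coord a3 aq2 a5 aq4 u : u \in U ->
  C35_coord q a3 aq2 a5 aq4 u ^+ q = C35_coord q (aq2 ^+ q) (a3 ^+ q) (aq4 ^+ q) (a5 ^+ q) u.
Proof.
move=> uU; have conj c a b : (a + b = q.+1)%N -> (c * u ^+ a) ^+ q = c ^+ q * u ^+ b.
  by move=> ab; rewrite exprMn (exprq_Uroots_conj uU ab).
rewrite /C35_coord !exprDn_pchar // (conj _ 3 (q - 2)%N) ?(conj _ (q - 2)%N 3)
  ?(conj _ 5 (q - 4)%N) ?(conj _ (q - 4)%N 5); try lia.
by ring.
Qed.

Lemma in_C35_dual_trace (c : {ffun F -> F}) k :
  in_C35_dual q c -> in_C35_dual q [ffun u => trace (k * c u)].
Proof.
case/andP=> /forallP c_supp /forallP c_dual; apply/andP; split.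
  apply/forallP => u; apply/implyP => uU.
  by rewrite ffunE (eqP (implyP (c_supp u) uU)) mulr0 /trace expr0q addr0.
have dual a3 aq2 a5 aq4 : \sum_(u in U) c u * C35_coord q a3 aq2 a5 aq4 u = 0.
  by apply/eqP; move: (c_dual a3) => /forallP/(_ aq2)/forallP/(_ a5)/forallP/(_ aq4).
apply/forallP => a3; apply/forallP => aq2; apply/forallP => a5; apply/forallP => aq4.
(* sum_u (k c_u)^q C35_coord a u is the q-th power of sum_u k c_u C35_coord a' u. *)
set a' := C35_coord q (aq2 ^+ q) (a3 ^+ q) (aq4 ^+ q) (a5 ^+ q).
apply/eqP; transitivity (k * \sum_(u in U) c u * C35_coord q a3 aq2 a5 aq4 u
                         + (k * \sum_(u in U) c u * a' u) ^+ q).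
  rewrite !mulr_sumr exprq_sum -big_split /=; apply: eq_bigr => u uU.
  by rewrite ffunE /trace !exprMn /a' exprq_C35_coord // !exprqq; ring.
by rewrite !dual mulr0 add0r expr0q.
Qed.

(* With x = u^2 and d = c u^(q-4), the checks against u^3, u^(q-2), u^5, u^(q-4)
   become the power sums of exponents 4, 1, 5, 0, since u^(q+1) = 1. *)
Definition C35_power_sum (u1 u2 u3 u4 c1 c2 c3 c4 : F) : nat -> F :=
  power_sum (u1 ^+ 2) (u2 ^+ 2) (u3 ^+ 2) (u4 ^+ 2)
    (c1 * u1 ^+ (q - 4)) (c2 * u2 ^+ (q - 4)) (c3 * u3 ^+ (q - 4)) (c4 * u4 ^+ (q - 4)).

Lemma C35_exponents u : u \in U ->
  [/\ u ^+ 3 = u ^+ (q - 4) * (u ^+ 2) ^+ 4, u ^+ (q - 2) = u ^+ (q - 4) * u ^+ 2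
    & u ^+ 5 = u ^+ (q - 4) * (u ^+ 2) ^+ 5].
Proof.
move=> uU; rewrite -!exprM -!exprD.
have shift k : u ^+ (q.+1 + k) = u ^+ k by rewrite exprD Uroots_exprS // mul1r.
by split; [rewrite -shift | | rewrite -shift]; congr (_ ^+ _); lia.
Qed.

Lemma in_C35_dual4 (u1 u2 u3 u4 : F) (c : {ffun F -> F}) :
  uniq [:: u1; u2; u3; u4] -> {subset [:: u1; u2; u3; u4] <= U} ->
  (forall u, u \notin [:: u1; u2; u3; u4] -> c u = 0) ->
  in_C35_dual q c <-> power_sums_vanish (C35_power_sum u1 u2 u3 u4 (c u1) (c u2) (c u3) (c u4)).
Proof.
move=> s_uniq sU c_off; set ps := C35_power_sum _ _ _ _ _ _ _ _.
have [u1U u2U u3U u4U] : [/\ u1 \in U, u2 \in U, u3 \in U & u4 \in U].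
  by split; apply: sU; rewrite !inE eqxx ?orbT.
have sumE a3 aq2 a5 aq4 : \sum_(u in U) c u * C35_coord q a3 aq2 a5 aq4 u
    = a3 * ps 4%N + aq2 * ps 1%N + a5 * ps 5%N + aq4 * ps 0%N.
  rewrite (big_support_seq s_uniq sU) => [|u /c_off->]; last by rewrite mul0r.
  rewrite !big_cons big_nil /C35_coord.
  have [-> -> ->] := C35_exponents u1U; have [-> -> ->] := C35_exponents u2U.
  have [-> -> ->] := C35_exponents u3U; have [-> -> ->] := C35_exponents u4U.
  by rewrite /ps /C35_power_sum /power_sum; ring.
split.
  case/andP=> _ /forallP c_dual.
  have dual a3 aq2 a5 aq4 : a3 * ps 4%N + aq2 * ps 1%N + a5 * ps 5%N + aq4 * ps 0%N = 0.
    rewrite -sumE; apply/eqP.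
    by move: (c_dual a3) => /forallP/(_ aq2)/forallP/(_ a5)/forallP/(_ aq4).
  split; [move: (dual 0 0 0 1) | move: (dual 0 1 0 0) | move: (dual 1 0 0 0)
         | move: (dual 0 0 1 0)]; by rewrite !mul0r ?add0r ?addr0 mul1r.
case=> ps0 ps1 ps4 ps5; apply/andP; split.
  by apply/forallP => u; apply/implyP => uU; apply/eqP/c_off; apply: contra uU; apply: sU.
apply/forallP => a3; apply/forallP => aq2; apply/forallP => a5; apply/forallP => aq4.
by rewrite sumE ps0 ps1 ps4 ps5 !mulr0 !addr0.
Qed.

Lemma B4_equianharmonic (u1 u2 u3 u4 : F) :
  uniq [:: u1; u2; u3; u4] -> {subset [:: u1; u2; u3; u4] <= U} ->
  [set:: [:: u1; u2; u3; u4]] \in B4_C35_dual_GFq F q ->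
  equianharmonic (u1 ^+ 2) (u2 ^+ 2) (u3 ^+ 2) (u4 ^+ 2) = 0.
Proof.
move=> s_uniq sU; rewrite inE => /existsP[c /and3P[/andP[c_dual _] /eqP supp_c _]].
have supp_cE u : (c u != 0) = (u \in [:: u1; u2; u3; u4]).
  by move/setP/(_ u): supp_c; rewrite !in_set => ->.
have c_off u : u \notin [:: u1; u2; u3; u4] -> c u = 0.
  by rewrite -supp_cE negbK => /eqP.
apply: (power_sums_vanish_equianharmonic charF2 (uniq_sqr charF2 s_uniq)
          ((in_C35_dual4 s_uniq sU c_off).1 c_dual)).
by rewrite mulf_neq0 ?supp_cE ?mem_head // expf_neq0 // Uroots_neq0 // sU ?mem_head.
Qed.

Lemma supp_C35_dual4 (u1 u2 u3 u4 : F) (c : {ffun F -> F}) :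
  uniq [:: u1; u2; u3; u4] -> {subset [:: u1; u2; u3; u4] <= U} ->
  (forall u, u \notin [:: u1; u2; u3; u4] -> c u = 0) -> in_C35_dual q c -> c u1 != 0 ->
  supp c = [set:: [:: u1; u2; u3; u4]].
Proof.
move=> s_uniq sU c_off c_dual c1_neq0.
have [u1U u2U u3U u4U] : [/\ u1 \in U, u2 \in U, u3 \in U & u4 \in U].
  by split; apply: sU; rewrite !inE eqxx ?orbT.
have [|d2 d3 d4] := power_sums_vanish_neq0 charF2 (uniq_sqr charF2 s_uniq)
                      ((in_C35_dual4 s_uniq sU c_off).1 c_dual).
  by rewrite mulf_neq0 // expf_neq0 // Uroots_neq0.
apply/setP => u; rewrite !in_set; apply/idP/idP => [|u_in].
  by apply: contraR => /c_off ->; rewrite eqxx.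
move: u_in; rewrite !inE => /or4P[] /eqP-> //;
  [move: d2 | move: d3 | move: d4]; by apply: contraNneq => ->; rewrite mul0r.
Qed.

Lemma equianharmonic_C35_dual (u1 u2 u3 u4 : F) :
  uniq [:: u1; u2; u3; u4] -> {subset [:: u1; u2; u3; u4] <= U} ->
  equianharmonic (u1 ^+ 2) (u2 ^+ 2) (u3 ^+ 2) (u4 ^+ 2) = 0 ->
  exists c : {ffun F -> F}, [/\ in_C35_dual q c,
    forall u, u \notin [:: u1; u2; u3; u4] -> c u = 0 & c u1 != 0].
Proof.
move=> s_uniq sU Q0.
have [u1U u2U u3U u4U] : [/\ u1 \in U, u2 \in U, u3 \in U & u4 \in U].
  by split; apply: sU; rewrite !inE eqxx ?orbT.
have [d1 [d2 [d3 [d4 [ps d1_neq0]]]]] :=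
  equianharmonic_power_sums_vanish charF2 (uniq_sqr charF2 s_uniq) Q0.
pose c := word_on [:: u1; u2; u3; u4] [:: d1 * u1 ^+ 5; d2 * u2 ^+ 5; d3 * u3 ^+ 5; d4 * u4 ^+ 5].
have c_off u : u \notin [:: u1; u2; u3; u4] -> c u = 0 by apply: word_on_notin.
have cE i : (i < 4)%N -> c (nth 0 [:: u1; u2; u3; u4] i)
    = nth 0 [:: d1 * u1 ^+ 5; d2 * u2 ^+ 5; d3 * u3 ^+ 5; d4 * u4 ^+ 5] i.
  exact: word_on_nth s_uniq.
have c1 : c u1 = d1 * u1 ^+ 5 := cE 0%N isT.
have c2 : c u2 = d2 * u2 ^+ 5 := cE 1%N isT.
have c3 : c u3 = d3 * u3 ^+ 5 := cE 2%N isT.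
have c4 : c u4 = d4 * u4 ^+ 5 := cE 3%N isT.
exists c; split=> //; last by rewrite c1 mulf_neq0 // expf_neq0 // Uroots_neq0.
apply/(in_C35_dual4 s_uniq sU c_off).
have weight d u : u \in U -> d * u ^+ 5 * u ^+ (q - 4) = d.
  by move=> uU; rewrite -mulrA -exprD (_ : 5 + (q - 4) = q.+1)%N ?Uroots_exprS ?mulr1 //; lia.
by rewrite /C35_power_sum c1 c2 c3 c4 !weight.
Qed.

Lemma equianharmonic_B4 (u1 u2 u3 u4 : F) :
  uniq [:: u1; u2; u3; u4] -> {subset [:: u1; u2; u3; u4] <= U} ->
  equianharmonic (u1 ^+ 2) (u2 ^+ 2) (u3 ^+ 2) (u4 ^+ 2) = 0 ->
  [set:: [:: u1; u2; u3; u4]] \in B4_C35_dual_GFq F q.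
Proof.
move=> s_uniq sU /(equianharmonic_C35_dual s_uniq sU)[c0 [c0_dual c0_off c01_neq0]].
have [k trace_neq0] := exists_trace_neq0 c01_neq0.
pose c := [ffun u => trace (k * c0 u)].
have c_off u : u \notin [:: u1; u2; u3; u4] -> c u = 0.
  by move/c0_off => c0u_0; rewrite ffunE c0u_0 mulr0 /trace expr0q addr0.
have c_dual : in_C35_dual q c by apply: in_C35_dual_trace.
have supp_c : supp c = [set:: [:: u1; u2; u3; u4]].
  by apply: supp_C35_dual4 => //; rewrite ffunE.
rewrite inE; apply/existsP; exists c; rewrite supp_c eqxx /in_C35_dual_GFq c_dual /=.
apply/andP; split; first by apply/forallP => u; rewrite ffunE exprq_trace.
by rewrite cardsE; apply/eqP/card_uniqP.
Qed.

Section CrossPoint.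
Variables (x1 x2 x3 w : F).
Hypotheses (x_uniq : uniq [:: x1; x2; x3]) (xU : {subset [:: x1; x2; x3] <= U}).
Hypotheses (w_root : w ^+ 2 + w + 1 = 0) (w_fixed : w ^+ q = w).

Let x1U : x1 \in U. Proof. by apply: xU; rewrite !inE eqxx. Qed.
Let x2U : x2 \in U. Proof. by apply: xU; rewrite !inE eqxx orbT. Qed.
Let x3U : x3 \in U. Proof. by apply: xU; rewrite !inE eqxx !orbT. Qed.

Lemma exprq_cross_den :
  cross_den x1 x2 x3 w ^+ q = - cross_num x1 x2 x3 w / (x1 * x2 * x3).
Proof.
rewrite /cross_den /cross_num exprDn_pchar // exprNn_pchar // exprMn !exprDn_pchar //.
rewrite !exprNn_pchar // w_fixed !exprq_Uroots //.
by field; rewrite !Uroots_neq0.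
Qed.

Lemma exprq_cross_num :
  cross_num x1 x2 x3 w ^+ q = - cross_den x1 x2 x3 w / (x1 * x2 * x3).
Proof.
rewrite /cross_den /cross_num exprDn_pchar // exprNn_pchar // !exprMn !exprDn_pchar //.
rewrite !exprNn_pchar // w_fixed !exprq_Uroots //.
by field; rewrite !Uroots_neq0.
Qed.

Lemma cross_den_neq0 : cross_den x1 x2 x3 w != 0.
Proof.
have /uniq3P[n12 _ n23] := x_uniq.
apply/eqP => den0; have /eqP num0 : cross_num x1 x2 x3 w == 0.
  by rewrite -exprq_eq0 exprq_cross_num den0 oppr0 mul0r.
have /eqP : w * (x2 - x3) * (x2 - x1) = 0.
  transitivity (x2 * cross_den x1 x2 x3 w - cross_num x1 x2 x3 w).
    by rewrite /cross_den /cross_num; ring.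
  by rewrite den0 num0 mulr0 subrr.
have w_neq0 : w != 0 by apply: contra_eqN w_root => /eqP->; rewrite expr0n /= !add0r oner_neq0.
by rewrite !mulf_eq0 (negPf w_neq0) !subr_eq0 (negPf n23) eq_sym (negPf n12).
Qed.

Lemma cross_num_neq0 : cross_num x1 x2 x3 w != 0.
Proof.
apply: contra cross_den_neq0 => /eqP num0.
by rewrite -exprq_eq0 exprq_cross_den num0 oppr0 mul0r.
Qed.

Lemma cross_point_Uroots : cross_point x1 x2 x3 w \in U.
Proof.
rewrite inE exprS expr_div_n exprq_cross_num exprq_cross_den /cross_point; apply/eqP.
by field; rewrite oppr_eq0 cross_den_neq0 cross_num_neq0 !Uroots_neq0.
Qed.

Lemma cross_factor_eq0 X :
  (X * cross_den x1 x2 x3 w - cross_num x1 x2 x3 w == 0) = (X == cross_point x1 x2 x3 w).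
Proof.
rewrite subr_eq0 /cross_point; apply/eqP/eqP => [<- | ->].
  by rewrite mulfK // cross_den_neq0.
by rewrite divfK // cross_den_neq0.
Qed.

End CrossPoint.

Lemma exists_cube_root1_fixed : (q %% 3 = 1)%N -> exists w : F, w ^+ 2 + w + 1 = 0 /\ w ^+ q = w.
Proof.
move=> q_mod3; have [w w_root] : exists w : F, w ^+ 2 + w + 1 = 0.
  apply: exists_cube_root1; rewrite cardF -subn1.
  have [t ->] : exists t, q = (3 * t + 1)%N.
    by exists (q %/ 3)%N; rewrite {1}(divn_eq q 3) q_mod3 mulnC.
  by apply/dvdnP; exists (3 * t ^ 2 + 2 * t)%N; nia.
have w3 : w ^+ 3 = 1.
  apply/eqP; rewrite -subr_eq0; apply/eqP.
  by transitivity ((w - 1) * (w ^+ 2 + w + 1)); [ring | rewrite w_root mulr0].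
by exists w; split; rewrite // -(expr_mod q w3) q_mod3.
Qed.

Lemma equianharmonic_roots x1 x2 x3 : (q %% 3 = 1)%N ->
  uniq [:: x1; x2; x3] -> {subset [:: x1; x2; x3] <= U} ->
  #|[set X | equianharmonic x1 x2 x3 X == 0]| = 2 /\
  [set X | equianharmonic x1 x2 x3 X == 0] \subset U.
Proof.
move=> q_mod3 x_uniq xU; have /uniq3P[_ _ n23] := x_uniq.
have [w [w_root w_fixed]] := exists_cube_root1_fixed q_mod3.
have w'_root : (- (1 + w)) ^+ 2 + - (1 + w) + 1 = 0 by rewrite -w_root; ring.
have w'_fixed : (- (1 + w)) ^+ q = - (1 + w).
  by rewrite exprNn_pchar // exprDn_pchar // expr1n w_fixed.
have rootsE : [set X | equianharmonic x1 x2 x3 X == 0]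
    = [set cross_point x1 x2 x3 w; cross_point x1 x2 x3 (- (1 + w))].
  apply/setP => X; rewrite !inE (equianharmonic_factor _ _ _ _ w_root) mulf_eq0.
  by rewrite !cross_factor_eq0.
split; last first.
  rewrite rootsE; apply/subsetP => X; rewrite in_set2.
  by case/orP=> /eqP->; apply: cross_point_Uroots.
rewrite rootsE cards2 (_ : _ != _ = true) //; apply/negP => /eqP same_point.
set Y := cross_point x1 x2 x3 w in same_point.
have /eqP f0 : Y * cross_den x1 x2 x3 w - cross_num x1 x2 x3 w == 0 by rewrite cross_factor_eq0.
have /eqP f'0 : Y * cross_den x1 x2 x3 (- (1 + w)) - cross_num x1 x2 x3 (- (1 + w)) == 0.
  by rewrite cross_factor_eq0 // same_point.
have Y_root : equianharmonic x1 x2 x3 Y = 0.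
  by rewrite (equianharmonic_factor _ _ _ _ w_root) f0 mul0r.
move: (equianharmonic_repeat charF2 x_uniq Y_root).
by rewrite (cross_factors_common_root charF2 n23 f0 f'0) mem_head.
Qed.

Lemma B4_quadrupleP (u1 u2 u3 u4 : F) :
  uniq [:: u1; u2; u3; u4] -> {subset [:: u1; u2; u3; u4] <= U} ->
  reflect (equianharmonic (u1 ^+ 2) (u2 ^+ 2) (u3 ^+ 2) (u4 ^+ 2) = 0)
          ([set:: [:: u1; u2; u3; u4]] \in B4_C35_dual_GFq F q).
Proof.
by move=> s_uniq sU; apply: (iffP idP); [apply: B4_equianharmonic | apply: equianharmonic_B4].
Qed.

Lemma B4_block b : b \in B4_C35_dual_GFq F q -> b \subset U /\ #|b| = 4%N.
Proof.
rewrite inE => /existsP[c /and3P[/andP[/andP[c_supp _] _] /eqP-> /eqP->]].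
split=> //; apply/subsetP => u; rewrite inE; apply: contraR => uNU.
by move/forallP/(_ u)/implyP: c_supp => /(_ uNU) ->.
Qed.

Lemma B4_fourth_point (s1 s2 s3 y : F) : (q %% 3 = 1)%N ->
  uniq [:: s1; s2; s3] -> {subset [:: s1; s2; s3] <= U} ->
  (y \notin [set:: [:: s1; s2; s3]]) && (y |: [set:: [:: s1; s2; s3]] \in B4_C35_dual_GFq F q)
  = (equianharmonic (s1 ^+ 2) (s2 ^+ 2) (s3 ^+ 2) (y ^+ 2) == 0).
Proof.
move=> q_mod3 s_uniq sU; have x_uniq := uniq_sqr charF2 s_uniq.
have xU : {subset [seq s ^+ 2 | s <- [:: s1; s2; s3]] <= U}.
  by move=> x /mapP[s s_in ->]; rewrite Uroots_sqr sU.
have [_ rootsU] := equianharmonic_roots q_mod3 x_uniq xU.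
have [yU | yNU] := boolP (y \in U); last first.
  have /negbTE-> : equianharmonic (s1 ^+ 2) (s2 ^+ 2) (s3 ^+ 2) (y ^+ 2) != 0.
    by apply: contra yNU => Q0; rewrite -Uroots_sqr (subsetP rootsU) ?inE.
  apply/negbTE; apply: contra yNU => /andP[_ /B4_block[yS_U _]].
  by rewrite (subsetP yS_U) ?setU11.
rewrite inE; have [y_in | y_notin] := boolP (y \in [:: s1; s2; s3]).
  apply/esym/negbTE; apply: contraL y_in => /eqP/(equianharmonic_repeat charF2 x_uniq).
  by apply: contra; rewrite !inE => /or3P[] /eqP->; rewrite eqxx ?orbT.
have ys_uniq : uniq [:: y; s1; s2; s3] by rewrite cons_uniq y_notin.
have ysU : {subset [:: y; s1; s2; s3] <= U} by move=> u; rewrite inE => /predU1P[-> | /sU].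
rewrite /= -set_cons (equianharmonic_rot charF2).
exact/(B4_quadrupleP ys_uniq ysU)/eqP.
Qed.

Lemma card_B4_through3 (S : {set F}) : (q %% 3 = 1)%N -> S \subset U -> #|S| = 3%N ->
  #|[set b in B4_C35_dual_GFq F q | S \subset b]| = 2%N.
Proof.
move=> q_mod3 SU S3; rewrite card_blocks_through => [|b /B4_block[_ ->]]; last by rewrite S3.
have [s1 [s2 [s3 [s_uniq S_eq]]]] :
    exists s1 s2 s3, uniq [:: s1; s2; s3] /\ S = [set:: [:: s1; s2; s3]].
  move: (enum_uniq S) (set_enum S); rewrite cardE in S3.
  by case: (enum S) S3 => [|s1 [|s2 [|s3 []]]] // _ ? <-; exists s1, s2, s3.
have sU : {subset [:: s1; s2; s3] <= U} by move=> s s_in; rewrite (subsetP SU) // S_eq inE.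
have xU : {subset [seq s ^+ 2 | s <- [:: s1; s2; s3]] <= U}.
  by move=> x /mapP[s s_in ->]; rewrite Uroots_sqr sU.
have [card_roots _] := equianharmonic_roots q_mod3 (uniq_sqr charF2 s_uniq) xU.
rewrite -[RHS]card_roots -(card_preimset _ (sqrf_inj charF2)) S_eq.
by apply: eq_card => y; rewrite in_set [in RHS]inE [in RHS]inE B4_fourth_point.
Qed.

Lemma C35_design : (q %% 3 = 1)%N -> is_design 3 q.+1 4 2 U (B4_C35_dual_GFq F q).
Proof.
move=> q_mod3; split; first exact: card_Uroots.
by split=> [b | S]; [exact: B4_block | exact: card_B4_through3].
Qed.

End QuadraticExtension.

Theorem theorem27 (m : nat) (F : finFieldType) :
  (4 <= m)%N -> ~~ odd m -> #|F| = ((2 ^ m) ^ 2)%N ->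
  is_design 3 (2 ^ m).+1 4 2 (Uroots F (2 ^ m)) (B4_C35_dual_GFq F (2 ^ m)).
Proof.
move=> m_ge4 m_even cardF.
have charF2 : 2%N \in [pchar F] by apply: (card_finPcharP (n := (m * 2)%N)); rewrite // cardF expnM.
apply: C35_design => //.
- by rewrite pnatX pnatE // charF2.
- by rewrite -[4%N]/(2 ^ 2)%N leq_exp2l // (leq_trans _ m_ge4).
by rewrite -(odd_double_half m) (negPf m_even) add0n -mul2n expnM -modnXm exp1n.
Qed.
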